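(* Assume $|\mathcal S|\ge2$ and let $\epsilon,\delta,\tau>0$. Consider the following procedure (Tau-Push, DPPR part): set $r_{max}=\frac{\epsilon\delta}{m\tau}$; for each $\mathcal V_i\in\mathcal S$ run GFP$(G,\mathcal S,\mathcal V_i,r_{max})$ and record its outputs $\hat\pi_d(\mathcal V_i,\mathcal V_j)$ for all $\mathcal V_j\in\mathcal S$; then for each $\mathcal V_j\in\mathcal S$ with $\tau_j>\tau$, run GBP$(G,\mathcal S,\mathcal V_j,r^b_{max}(\mathcal V_j))$ with $r^b_{max}(\mathcal V_j)=\epsilon\delta\big/\max_{\mathcal V_i\in\mathcal S\setminus\{\mathcal V_j\}}\frac{1}{|F(\mathcal V_i)|}\sum_{v_s\in F(\mathcal V_i)}d(v_s)$, and replace the recorded $\hat\pi_d(\mathcal V_i,\mathcal V_j)$ by the GBP output for every $\mathcal V_i\in\mathcal S$. Then the procedure terminates and, for all $\mathcal V_i,\mathcal V_j\in\mathcal S$ with $\mathcal V_i\ne\mathcal V_j$, the final value $\hat\pi_d(\mathcal V_i,\mathcal V_j)$ is an $(\epsilon,\delta)$-approximation of $\pi_d(\mathcal V_i,\mathcal V_j)$.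
   Context: $G=(V,E)$ is a directed graph with $n$ nodes and $m$ edges, no self-loops, and every node of out-degree $d(v)\ge1$; $\alpha\in(0,1)$. PPR $\pi(u,v)$: probability that a random walk from $u$ which at each step stops with probability $\alpha$ and otherwise moves to a uniformly random out-neighbor stops at $v$; $\pi_d(u,v)=d(u)\pi(u,v)$. A collection $\mathcal S=\{\mathcal V_1,\dots,\mathcal V_k\}$ of supernodes is given, each $\mathcal V_i$ having a nonempty leaf set $F(\mathcal V_i)\subseteq V$, the leaf sets being pairwise disjoint. For supernodes, $\pi_d(\mathcal V_i,\mathcal V_j)=\frac{1}{|F(\mathcal V_i)||F(\mathcal V_j)|}\sum_{v_s\in F(\mathcal V_i),v_t\in F(\mathcal V_j)}\pi_d(v_s,v_t)$. The degree-normalized PageRank of $\mathcal V_j$ is $\tau_j=\frac{1}{m|F(\mathcal V_j)|}\sum_{v_t\in F(\mathcal V_j)}\sum_{v_k\in V}\pi_d(v_k,v_t)$. A value $\hat x$ is an $(\epsilon,\delta)$-approximation of $x\ge0$ if $|\hat x-x|\le\epsilon\delta$ when $x<\delta$, and $|\hat x-x|\le\epsilon x$ when $x\ge\delta$. Procedure GFP$(G,\mathcal S,\mathcal V_i,r_{max})$: set $\hat\pi_d(\mathcal V_i,\mathcal V_j)=0$ for all $\mathcal V_j\in\mathcal S$; set $r(\mathcal V_i,v)=d(v)/|F(\mathcal V_i)|$ for $v\in F(\mathcal V_i)$ and $0$ otherwise. While some $v_k$ has $r(\mathcal V_i,v_k)>d(v_k)\,r_{max}$, pick any such $v_k$ and: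 if $v_k\in F(\mathcal V_j)$ for some $\mathcal V_j\in\mathcal S$, add $\alpha\,r(\mathcal V_i,v_k)/|F(\mathcal V_j)|$ to $\hat\pi_d(\mathcal V_i,\mathcal V_j)$; for each out-neighbor $v_j$ of $v_k$ add $(1-\alpha)\,r(\mathcal V_i,v_k)/d(v_k)$ to $r(\mathcal V_i,v_j)$; then set $r(\mathcal V_i,v_k)=0$. Output $\hat\pi_d(\mathcal V_i,\cdot)$. Procedure GBP$(G,\mathcal S,\mathcal V_j,r^b_{max})$: set $\hat\pi_d(\mathcal V_i,\mathcal V_j)=0$ for all $\mathcal V_i\in\mathcal S$; set $r(v,\mathcal V_j)=1/|F(\mathcal V_j)|$ for $v\in F(\mathcal V_j)$ and $0$ otherwise. While some $v_k$ has $r(v_k,\mathcal V_j)>r^b_{max}$, pick any such $v_k$ and: if $v_k\in F(\mathcal V_i)$ for some $\mathcal V_i\in\mathcal S$, add $\alpha\,d(v_k)\,r(v_k,\mathcal V_j)/|F(\mathcal V_i)|$ to $\hat\pi_d(\mathcal V_i,\mathcal V_j)$; for each in-neighbor $v_i$ of $v_k$ add $(1-\alpha)\,r(v_k,\mathcal V_j)/d(v_i)$ to $r(v_i,\mathcal V_j)$; then set $r(v_k,\mathcal V_j)=0$. Output $\hat\pi_d(\cdot,\mathcal V_j)$. *)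

From HB Require Import structures.
From mathcomp Require Import all_boot all_order all_algebra.
From mathcomp Require Import all_classical all_reals all_analysis.
Set Implicit Arguments. Unset Strict Implicit. Unset Printing Implicit Defensive.
Import Order.TTheory GRing.Theory Num.Theory.
Local Open Scope ring_scope.

Inductive reach (T : Type) (step : T -> T -> Prop) (x : T) : T -> Prop :=
| reach_refl : reach step x x
| reach_step y z : reach step x y -> step y z -> reach step x z.

Section Defs.
Variables (R : realType) (n : nat) (e : rel 'I_n) (k : nat)
  (F : 'I_k -> {set 'I_n}).

Definition outdeg (v : 'I_n) : nat := #|[set w | e v w]|.
Definition nedges : nat := #|[set p : 'I_n * 'I_n | e p.1 p.2]|.

Definition trans_mx : 'M[R]_n :=
  \matrix_(u, w) (if e u w then ((outdeg u)%:R)^-1 else 0).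
Definition walk_mx (t : nat) : 'M[R]_n := iter t (fun M => M *m trans_mx) 1%:M.

(* PPR: probability that the alpha-stopping walk from u stops at v
   (it stops after exactly t steps w.p. alpha (1-alpha)^t) *)
Definition ppr (alpha : R) (u v : 'I_n) : R :=
  limn (fun N : nat => \sum_(0 <= t < N) (alpha * (1 - alpha) ^+ t * walk_mx t u v)).
Definition ppr_d (alpha : R) (u v : 'I_n) : R := (outdeg u)%:R * ppr alpha u v.

Definition ppr_d_sn (alpha : R) (i j : 'I_k) : R :=
  ((#|F i| * #|F j|)%:R)^-1 * \sum_(s in F i) \sum_(t in F j) ppr_d alpha s t.
Definition tau_pr (alpha : R) (j : 'I_k) : R :=
  ((nedges * #|F j|)%:R)^-1 * \sum_(t in F j) \sum_(u : 'I_n) ppr_d alpha u t.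

Definition ed_approx (eps delta xhat x : R) : Prop :=
  (x < delta -> `|xhat - x| <= eps * delta) /\
  (delta <= x -> `|xhat - x| <= eps * x).

(* states of the push procedures: (estimates indexed by supernodes, residues) *)
Definition pstate := (('I_k -> R) * ('I_n -> R))%type.

Definition gfp_init (i : 'I_k) : pstate :=
  (fun _ => 0, fun v => if v \in F i then (outdeg v)%:R / (#|F i|)%:R else 0).
Definition gfp_push (alpha : R) (st : pstate) (vk : 'I_n) : pstate :=
  let r := st.2 vk in
  (fun j => st.1 j + (if vk \in F j then alpha * r / (#|F j|)%:R else 0),
   fun w => if w == vk then 0
            else st.2 w + (if e vk w then (1 - alpha) * r / (outdeg vk)%:R else 0)).
Definition gfp_step (alpha rmax : R) (st st' : pstate) : Prop :=
  exists vk, (outdeg vk)%:R * rmax < st.2 vk /\ st' = gfp_push alpha st vk.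
Definition gfp_terminal (rmax : R) (st : pstate) : Prop :=
  forall v, st.2 v <= (outdeg v)%:R * rmax.

Definition gbp_init (j : 'I_k) : pstate :=
  (fun _ => 0, fun v => if v \in F j then ((#|F j|)%:R)^-1 else 0).
Definition gbp_push (alpha : R) (st : pstate) (vk : 'I_n) : pstate :=
  let r := st.2 vk in
  (fun i => st.1 i + (if vk \in F i then alpha * (outdeg vk)%:R * r / (#|F i|)%:R else 0),
   fun w => if w == vk then 0
            else st.2 w + (if e w vk then (1 - alpha) * r / (outdeg w)%:R else 0)).
Definition gbp_step (alpha rbmax : R) (st st' : pstate) : Prop :=
  exists vk, rbmax < st.2 vk /\ st' = gbp_push alpha st vk.
Definition gbp_terminal (rbmax : R) (st : pstate) : Prop :=
  forall v, st.2 v <= rbmax.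

Definition tp_rmax (eps delta tau : R) : R := eps * delta / ((nedges)%:R * tau).
Definition avg_deg (i : 'I_k) : R :=
  ((#|F i|)%:R)^-1 * \sum_(s in F i) (outdeg s)%:R.
(* max over V_i in S \ {V_j}; all averages are >= 1 > 0, so 0 is a neutral seed *)
Definition tp_rbmax (eps delta : R) (j : 'I_k) : R :=
  eps * delta / \big[Num.max/0]_(i | i != j) avg_deg i.

End Defs.

From HB Require Import structures.
From mathcomp Require Import all_boot all_order all_algebra.
From mathcomp Require Import all_classical all_reals all_analysis.
From mathcomp Require Import ring lra.
Import numFieldNormedType.Exports.
Import Order.TTheory GRing.Theory Num.Theory.
Local Open Scope classical_set_scope.
Local Open Scope ring_scope.
Set Implicit Arguments. Unset Strict Implicit. Unset Printing Implicit Defensive.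

(* Both push procedures maintain a residue vector r >= 0 and an exact invariant:
   GFP from V_i keeps  pi_d(V_i,V_j) = est_j + |F j|^-1 sum_(t in F j) sum_v r(v) pi(v,t),
   GBP towards V_j keeps pi_d(V_i,V_j) = est_i + |F i|^-1 sum_(s in F i) d(s) sum_v pi(s,v) r(v).
   Invariance follows from the forward/backward linear equations of PPR: a push at
   vk moves exactly alpha r(vk) of residual mass into the estimates.  Hence the
   residual mass is a nonnegative potential decreasing by more than alpha rmax per
   push, which gives termination; at termination the residues are small, so the
   neglected mass is at most eps delta, and the estimates are underestimates within
   eps delta, i.e. (eps, delta)-approximations. *)

Lemma cvg_linear_recursion (R : realType) (I : finType) (S : nat -> R) (L a : R)
    (b : I -> R) (g : I -> nat -> R) (G : I -> R) :
  S N @[N --> \oo] --> L -> (forall i, g i N @[N --> \oo] --> G i) ->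
  (forall N, S N.+1 = a + \sum_i b i * g i N) ->
  L = a + \sum_i b i * G i.
Proof.
move=> cvgS cvgg recS.
have cvg_shift : S N.+1 @[N --> \oo] --> L by rewrite cvg_shiftS.
have cvg_rhs : (a + \sum_i b i * g i N) @[N --> \oo] --> a + \sum_i b i * G i.
  apply: cvgD; first exact: cvg_cst.
  apply: cvg_big => //; first exact: add_continuous.
  by move=> i _; apply: cvgMl_tmp; exact: cvgg.
have shift_eq : (fun N => S N.+1) = (fun N => a + \sum_i b i * g i N).
  by apply: funext => N; exact: recS.
rewrite shift_eq in cvg_shift; exact: cvg_unique cvg_shift cvg_rhs.
Qed.

Lemma acc_of_potential (R : realType) (T : Type) (step : T -> T -> Prop)
    (inv : T -> Prop) (phi : T -> R) (c : R) :
  0 < c -> (forall x y, inv x -> step x y -> inv y /\ phi y <= phi x - c) ->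
  (forall x, inv x -> 0 <= phi x) ->
  forall x, inv x -> Acc (fun y x => step x y) x.
Proof.
move=> c_gt0 step_dec phi_ge0.
suff acc_bounded N x : inv x -> phi x <= N%:R * c -> Acc (fun y x => step x y) x.
  move=> x invx; apply: (acc_bounded (Num.Def.archi_bound (phi x / c))) => //.
  rewrite -ler_pdivrMr //; apply: ltW.
  exact: archi_boundP (divr_ge0 (phi_ge0 x invx) (ltW c_gt0)).
elim: N x => [|N IHN] x invx phix; constructor => y xy;
  have [invy phiy] := step_dec x y invx xy.
- suff : phi y < 0 by rewrite ltNge phi_ge0.
  rewrite mul0r in phix.
  by apply: le_lt_trans phiy _; rewrite subr_lt0 (le_lt_trans phix).
- apply: IHN invy _; apply: le_trans phiy _.
  by rewrite lerBlDr -[N.+1]addn1 natrD mulrDl mul1r in phix *.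
Qed.

Lemma ed_approx_of_underestimate (R : realType) (eps delta xhat x : R) :
  0 <= eps -> xhat <= x -> x - xhat <= eps * delta -> ed_approx eps delta xhat x.
Proof.
move=> eps_ge0 le_xhat err; rewrite /ed_approx distrC ger0_norm ?subr_ge0 //.
by split=> // delta_le_x; apply: le_trans err _; exact: ler_wpM2l.
Qed.

Lemma sum_delta (R : pzSemiRingType) (n : nat) (A : {set 'I_n}) (f : 'I_n -> R) v :
  \sum_(t in A) f t * (v == t)%:R = if v \in A then f v else 0.
Proof.
rewrite (big_mkcond (mem A)) (bigD1 v) //= eqxx mulr1 big1 ?addr0.
  by case: ifP => //; rewrite mul0r.
by move=> t; rewrite eq_sym => /negPf ->; rewrite mulr0; case: ifP.
Qed.

Lemma sum_kronecker (R : pzSemiRingType) (n : nat) (v : 'I_n) :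
  \sum_t ((v == t)%:R : R) = 1.
Proof.
by rewrite (bigD1 v) //= eqxx big1 ?addr0 // => t; rewrite eq_sym => /negPf ->.
Qed.

Section RandomWalk.
Variables (R : realType) (n : nat) (e : rel 'I_n) (alpha : R).
Hypothesis outdeg_gt0 : forall v : 'I_n, (0 < outdeg e v)%N.
Hypothesis alpha_gt0 : 0 < alpha.
Hypothesis alpha_lt1 : alpha < 1.

Local Notation P := (trans_mx R e).
Local Notation W := (walk_mx R e).
Local Notation ppr := (ppr e alpha).

Lemma walk_mxS t : W t.+1 = W t *m P.
Proof. by rewrite /walk_mx iterS. Qed.

Lemma walk_mxSl t : W t.+1 = P *m W t.
Proof.
elim: t => [|t IHt]; first by rewrite walk_mxS /= mul1mx mulmx1.
by rewrite [LHS]walk_mxS [in LHS]IHt -mulmxA -walk_mxS.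
Qed.

Lemma walk_mx0 u v : W 0 u v = (u == v)%:R.
Proof. by rewrite /= mxE. Qed.

Lemma trans_mx_ge0 u v : 0 <= P u v.
Proof. by rewrite mxE; case: ifP; rewrite // invr_ge0 ler0n. Qed.

(* P is stochastic: every node has an out-neighbour. *)
Lemma trans_mx_row u : \sum_v P u v = 1.
Proof.
under eq_bigr do rewrite mxE.
rewrite -big_mkcond /= sumr_const.
have -> : #|[pred v | e u v]| = outdeg e u by rewrite /outdeg cardsE.
rewrite -[X in X = 1]mulr_natr mulVf // pnatr_eq0 -lt0n; exact: outdeg_gt0.
Qed.

Lemma walk_mx_ge0 t u v : 0 <= W t u v.
Proof.
elim: t u v => [|t IHt] u v; first by rewrite walk_mx0 ler0n.
by rewrite walk_mxS mxE sumr_ge0 // => w _; rewrite mulr_ge0 ?trans_mx_ge0.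
Qed.

Lemma walk_mx_row t u : \sum_v W t u v = 1.
Proof.
elim: t u => [|t IHt] u.
  by rewrite (bigD1 u) //= walk_mx0 eqxx big1 ?addr0 // => v; rewrite walk_mx0 eq_sym => /negPf ->.
under eq_bigr do rewrite walk_mxS mxE.
rewrite exchange_big /=.
under eq_bigr do rewrite -mulr_sumr trans_mx_row mulr1.
exact: IHt.
Qed.

Lemma one_minus_alpha_ge0 : 0 <= 1 - alpha.
Proof. by rewrite subr_ge0 ltW. Qed.

Definition ppr_partial (N : nat) (u v : 'I_n) : R :=
  \sum_(0 <= t < N) (alpha * (1 - alpha) ^+ t * W t u v).

Lemma ppr_term_ge0 t u v : 0 <= alpha * (1 - alpha) ^+ t * W t u v.
Proof.
by rewrite !mulr_ge0 ?walk_mx_ge0 ?exprn_ge0 ?one_minus_alpha_ge0 ?ltW.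
Qed.

Lemma geometric_sum N : \sum_(0 <= t < N) alpha * (1 - alpha) ^+ t = 1 - (1 - alpha) ^+ N.
Proof.
elim: N => [|N IHN]; first by rewrite big_geq // expr0 subrr.
by rewrite big_nat_recr //= IHN exprS; ring.
Qed.

Lemma ppr_partial_le1 N u v : ppr_partial N u v <= 1.
Proof.
apply: (@le_trans _ _ (\sum_(0 <= t < N) alpha * (1 - alpha) ^+ t)).
  apply: ler_sum => t _; rewrite -[leRHS]mulr1 ler_wpM2l //.
    by rewrite mulr_ge0 ?exprn_ge0 ?one_minus_alpha_ge0 ?ltW.
  rewrite -(walk_mx_row t u) (bigD1 v) //= lerDl.
  by apply: sumr_ge0 => w _; exact: walk_mx_ge0.
by rewrite geometric_sum lerBlDr lerDl exprn_ge0 ?one_minus_alpha_ge0.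
Qed.

Lemma ppr_partial_nondecreasing u v :
  {homo (fun N => ppr_partial N u v) : a b / (a <= b)%N >-> a <= b}.
Proof.
apply/nondecreasing_seqP => N.
by rewrite /ppr_partial big_nat_recr //= lerDl ppr_term_ge0.
Qed.

(* The partial sums are bounded and nondecreasing, hence converge to ppr. *)
Lemma ppr_partial_cvg u v : ppr_partial N u v @[N --> \oo] --> ppr u v.
Proof.
have bounded : has_ubound (range (fun N => ppr_partial N u v)).
  by exists 1 => _ [N _ <-]; exact: ppr_partial_le1.
have cvg_sup := nondecreasing_cvgn (@ppr_partial_nondecreasing u v) bounded.
by rewrite /ppr (cvg_lim _ cvg_sup).
Qed.

Lemma ppr_ge0 u v : 0 <= ppr u v.
Proof.
have := nondecreasing_cvgn_le (@ppr_partial_nondecreasing u v)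
  (cvgP _ (@ppr_partial_cvg u v)) 0.
by rewrite /ppr_partial big_geq.
Qed.

Lemma ppr_backward s v :
  ppr s v = alpha * (s == v)%:R + \sum_u (1 - alpha) * P u v * ppr s u.
Proof.
rewrite -walk_mx0.
apply: (cvg_linear_recursion (@ppr_partial_cvg s v) (fun u => @ppr_partial_cvg s u)) => N.
rewrite /ppr_partial big_nat_recl // expr0 mulr1; congr (_ + _).
under eq_bigr do rewrite walk_mxS mxE mulr_sumr.
rewrite exchange_big /=; apply: eq_bigr => u _.
by rewrite mulr_sumr; apply: eq_bigr => t _; rewrite exprS; ring.
Qed.

Lemma ppr_forward s v :
  ppr s v = alpha * (s == v)%:R + \sum_w (1 - alpha) * P s w * ppr w v.
Proof.
rewrite -walk_mx0.
apply: (cvg_linear_recursion (@ppr_partial_cvg s v) (fun w => @ppr_partial_cvg w v)) => N.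
rewrite /ppr_partial big_nat_recl // expr0 mulr1; congr (_ + _).
under eq_bigr do rewrite walk_mxSl mxE mulr_sumr.
rewrite exchange_big /=; apply: eq_bigr => u _.
by rewrite mulr_sumr; apply: eq_bigr => t _; rewrite exprS; ring.
Qed.

Lemma ppr_row s : \sum_v ppr s v = 1.
Proof.
set X := \sum_v _.
have fixpoint : X = alpha + (1 - alpha) * X.
  rewrite {1}/X; under eq_bigr do rewrite ppr_backward.
  have sum_delta_s : \sum_v (s == v)%:R = 1 :> R.
    by rewrite -[RHS](walk_mx_row 0 s); apply: eq_bigr => v _; rewrite walk_mx0.
  rewrite big_split -mulr_sumr sum_delta_s mulr1 exchange_big /=; congr (_ + _).
  rewrite /X mulr_sumr; apply: eq_bigr => u _.
  under eq_bigr do rewrite -mulrA (mulrC (P u _)) mulrA.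
  by rewrite -mulr_sumr trans_mx_row mulr1.
have alphaX : alpha * X = alpha by move: fixpoint; lra.
by apply: (mulfI (lt0r_neq0 alpha_gt0)); rewrite alphaX mulr1.
Qed.

End RandomWalk.

(* A push at node vk with kernel Q: the residue of vk is cleared and a (1 - alpha)
   fraction of it is redistributed along Q vk.  Forward pushes use Q = P, backward
   pushes use the transpose of P. *)
Section ResiduePush.
Variables (R : realType) (n : nat) (alpha : R).
Hypothesis alpha_le1 : alpha <= 1.

Definition push_residue (Q : 'I_n -> 'I_n -> R) (r : 'I_n -> R) (vk : 'I_n) :
    'I_n -> R :=
  fun w => r w - (w == vk)%:R * r vk + (1 - alpha) * Q vk w * r vk.

Lemma push_residue_ge0 Q r vk :
  (forall u w, 0 <= Q u w) -> (forall v, 0 <= r v) ->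
  forall w, 0 <= push_residue Q r vk w.
Proof.
move=> Q_ge0 r_ge0 w; rewrite /push_residue.
have spread_ge0 u : 0 <= (1 - alpha) * Q vk u * r vk.
  by rewrite !mulr_ge0 // subr_ge0.
case: eqP => [->|_]; first by rewrite /= mul1r subrr add0r.
by rewrite /= mul0r subr0 addr_ge0.
Qed.

Lemma push_residue_mass Q (M : 'I_n -> 'I_n -> R) r vk t :
  (forall u t, M u t = alpha * (u == t)%:R + \sum_w (1 - alpha) * Q u w * M w t) ->
  \sum_w push_residue Q r vk w * M w t =
  \sum_w r w * M w t - alpha * r vk * (vk == t)%:R.
Proof.
move=> M_eq; rewrite /push_residue.
under eq_bigr do rewrite mulrDl mulrBl.
rewrite big_split sumrB /=.
have pick_vk : \sum_w (w == vk)%:R * r vk * M w t = r vk * M vk t.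
  rewrite (bigD1 vk) //= eqxx mul1r big1 ?addr0 // => w /negPf ->.
  by rewrite !mul0r.
have spread : \sum_w (1 - alpha) * Q vk w * r vk * M w t =
              r vk * \sum_w (1 - alpha) * Q vk w * M w t.
  by rewrite mulr_sumr; apply: eq_bigr => w _; ring.
by rewrite pick_vk spread (M_eq vk t); ring.
Qed.

End ResiduePush.

(* GFP pushes along P and GBP pushes along the transpose of P are instances of
   push_residue; PPR solves the matching equation, giving the mass identities. *)
Section GraphPush.
Variables (R : realType) (n : nat) (e : rel 'I_n) (alpha : R) (k : nat)
  (F : 'I_k -> {set 'I_n}).
Hypothesis no_self_loop : forall v : 'I_n, ~~ e v v.
Hypothesis outdeg_gt0 : forall v : 'I_n, (0 < outdeg e v)%N.
Hypothesis alpha_gt0 : 0 < alpha.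
Hypothesis alpha_lt1 : alpha < 1.

Local Notation P := (trans_mx R e).
Local Notation ppr := (ppr e alpha).

Lemma outdeg_neq0 v : (outdeg e v)%:R != 0 :> R.
Proof. by rewrite pnatr_eq0 -lt0n. Qed.

Lemma gfp_push_residue (st : pstate R n k) vk :
  (gfp_push e F alpha st vk).2 =1 push_residue alpha P st.2 vk.
Proof.
move=> w; rewrite /push_residue /= mxE; case: eqP => [->|_].
  by rewrite (negPf (no_self_loop vk)) /= mul1r subrr mulr0 mul0r addr0.
rewrite /= mul0r subr0; case: ifP => _; last by rewrite mulr0 mul0r.
by field; exact: outdeg_neq0.
Qed.

Lemma gbp_push_residue (st : pstate R n k) vk :
  (gbp_push e F alpha st vk).2 =1 push_residue alpha (fun u w => P w u) st.2 vk.
Proof.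
move=> w; rewrite /push_residue /= mxE; case: eqP => [->|_].
  by rewrite (negPf (no_self_loop vk)) /= mul1r subrr mulr0 mul0r addr0.
rewrite /= mul0r subr0; case: ifP => _; last by rewrite mulr0 mul0r.
by field; exact: outdeg_neq0.
Qed.

Lemma gfp_push_ge0 (st : pstate R n k) vk :
  (forall v, 0 <= st.2 v) -> forall w, 0 <= (gfp_push e F alpha st vk).2 w.
Proof.
move=> r_ge0 w; rewrite gfp_push_residue.
apply: push_residue_ge0 => //; first exact: ltW.
by move=> u v; exact: trans_mx_ge0.
Qed.

Lemma gbp_push_ge0 (st : pstate R n k) vk :
  (forall v, 0 <= st.2 v) -> forall w, 0 <= (gbp_push e F alpha st vk).2 w.
Proof.
move=> r_ge0 w; rewrite gbp_push_residue.
apply: push_residue_ge0 => //; first exact: ltW.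
by move=> u v; exact: trans_mx_ge0.
Qed.

Lemma gfp_push_mass (st : pstate R n k) vk t :
  \sum_v (gfp_push e F alpha st vk).2 v * ppr v t =
  \sum_v st.2 v * ppr v t - alpha * st.2 vk * (vk == t)%:R.
Proof.
under eq_bigr do rewrite gfp_push_residue.
exact/push_residue_mass/(ppr_forward outdeg_gt0 alpha_gt0 alpha_lt1).
Qed.

Lemma gbp_push_mass (st : pstate R n k) vk s :
  \sum_v ppr s v * (gbp_push e F alpha st vk).2 v =
  \sum_v ppr s v * st.2 v - alpha * st.2 vk * (vk == s)%:R.
Proof.
under eq_bigr do rewrite gbp_push_residue mulrC.
under [in RHS]eq_bigr do rewrite mulrC.
apply: (push_residue_mass (M := fun w s => ppr s w)) => u t.
by rewrite (ppr_backward outdeg_gt0 alpha_gt0 alpha_lt1) eq_sym.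
Qed.

End GraphPush.

Section PushAnalysis.
Variables (R : realType) (n : nat) (e : rel 'I_n) (alpha : R) (k : nat)
  (F : 'I_k -> {set 'I_n}).
Hypothesis no_self_loop : forall v : 'I_n, ~~ e v v.
Hypothesis outdeg_gt0 : forall v : 'I_n, (0 < outdeg e v)%N.
Hypothesis supernode_nonempty : forall i : 'I_k, F i != finset.set0.
Hypothesis alpha_gt0 : 0 < alpha.
Hypothesis alpha_lt1 : alpha < 1.

Local Notation ppr := (ppr e alpha).
Local Notation ppr_sn := (ppr_d_sn e F alpha).
Local Notation d v := ((outdeg e v)%:R : R).
Local Notation card j := ((#|F j|)%:R : R).

Lemma card_supernode_gt0 i : 0 < card i.
Proof. by rewrite ltr0n card_gt0. Qed.

(* Residual mass of r that a forward walk would still deposit in V_j. *)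
Definition forward_mass (r : 'I_n -> R) (j : 'I_k) : R :=
  \sum_(t in F j) \sum_v r v * ppr v t.

Definition gfp_invariant (i : 'I_k) (st : pstate R n k) : Prop :=
  (forall v, 0 <= st.2 v) /\
  forall j, ppr_sn i j = st.1 j + (card j)^-1 * forward_mass st.2 j.

Lemma gfp_invariant_init i : gfp_invariant i (gfp_init R e F i).
Proof.
split=> [v|j] /=; first by case: ifP => // _; rewrite divr_ge0 ?ler0n.
rewrite add0r /forward_mass /ppr_d_sn exchange_big /= !mulr_sumr.
apply: eq_bigr => t _; rewrite (big_mkcond (mem (F i))) !mulr_sumr.
apply: eq_bigr => s _ /=; case: ifP => _; last by rewrite mul0r !mulr0.
by rewrite /ppr_d natrM invfM; ring.
Qed.

Lemma gfp_invariant_push i st vk :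
  gfp_invariant i st -> gfp_invariant i (gfp_push e F alpha st vk).
Proof.
move=> [r_ge0 exact_sn]; split; first exact: gfp_push_ge0.
move=> j; rewrite exact_sn /forward_mass.
under [in RHS]eq_bigr do rewrite (gfp_push_mass F no_self_loop outdeg_gt0 alpha_gt0 alpha_lt1).
rewrite sumrB (sum_delta (F j) (fun=> alpha * st.2 vk)) /=.
by case: ifP => _; [ring | rewrite subr0 addr0].
Qed.

Lemma gfp_invariant_reach i rmax st :
  reach (gfp_step e F alpha rmax) (gfp_init R e F i) st -> gfp_invariant i st.
Proof.
elim=> [|y z _ inv_y [vk [_ ->]]]; first exact: gfp_invariant_init.
exact: gfp_invariant_push.
Qed.

(* GFP terminates: the total residual mass drops by alpha r(vk) > alpha rmax. *)
Lemma gfp_terminates i rmax :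
  0 < rmax -> Acc (fun y x => gfp_step e F alpha rmax x y) (gfp_init R e F i).
Proof.
move=> rmax_gt0.
apply: (@acc_of_potential R _ _ (gfp_invariant i)
  (fun st => \sum_t \sum_v st.2 v * ppr v t) (alpha * rmax)).
- exact: mulr_gt0.
- move=> x y inv_x [vk [big_residue ->]]; split; first exact: gfp_invariant_push.
  under eq_bigr do rewrite (gfp_push_mass F no_self_loop outdeg_gt0 alpha_gt0 alpha_lt1).
  rewrite sumrB -mulr_sumr sum_kronecker mulr1 lerD2l lerN2 ler_wpM2l ?ltW //.
  apply: le_lt_trans big_residue.
  by rewrite -[leLHS]mul1r ler_wpM2r ?ler1n ?outdeg_gt0 // ltW.
- move=> x [r_ge0 _]; apply: sumr_ge0 => t _; apply: sumr_ge0 => v _.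
  by rewrite mulr_ge0 ?ppr_ge0.
- exact: gfp_invariant_init.
Qed.

Lemma forward_mass_bound (r : 'I_n -> R) j rmax :
  (forall v, 0 <= r v) -> (forall v, r v <= d v * rmax) ->
  0 <= forward_mass r j <= rmax * \sum_(t in F j) \sum_u ppr_d e alpha u t.
Proof.
move=> r_ge0 r_le; apply/andP; split.
  apply: sumr_ge0 => t _; apply: sumr_ge0 => v _.
  by rewrite mulr_ge0 ?ppr_ge0.
rewrite mulr_sumr; apply: ler_sum => t _; rewrite mulr_sumr; apply: ler_sum => v _.
rewrite /ppr_d mulrA (mulrC rmax) ler_wpM2r ?ppr_ge0 //.
Qed.


(* GFP is accurate for the target V_j when tau_j <= tau: the neglected residual
   mass is at most rmax m tau_j = eps delta tau_j / tau. *)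
Lemma gfp_accurate i j st (eps delta tau : R) :
  0 < eps -> 0 < delta -> 0 < tau -> (0 < nedges e)%N ->
  tau_pr e F alpha j <= tau -> gfp_invariant i st -> gfp_terminal e (tp_rmax e eps delta tau) st ->
  ed_approx eps delta (st.1 j) (ppr_sn i j).
Proof.
move=> eps_gt0 delta_gt0 tau_gt0 m_gt0 small_tau [r_ge0 exact_sn] terminal.
have /andP [mass_ge0 mass_le] := forward_mass_bound j r_ge0 terminal.
rewrite exact_sn; apply: ed_approx_of_underestimate; first exact: ltW.
  by rewrite lerDl mulr_ge0 // invr_ge0 ler0n.
rewrite addrC addKr; apply: le_trans (ler_wpM2l _ mass_le) _.
  by rewrite invr_ge0 ler0n.
have -> : (card j)^-1 * (tp_rmax e eps delta tau *
            \sum_(t in F j) \sum_u ppr_d e alpha u t) =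
          eps * delta * (tau_pr e F alpha j / tau).
  rewrite /tp_rmax /tau_pr natrM invfM; field.
  by rewrite (lt0r_neq0 tau_gt0) (lt0r_neq0 (card_supernode_gt0 j)) pnatr_eq0 -lt0n m_gt0.
rewrite -[leRHS]mulr1 ler_wpM2l ?ler_pdivrMr ?mul1r //.
by rewrite mulr_ge0 ?ltW.
Qed.


(* Residual mass of r that degree-weighted walks from V_i would still collect. *)
Definition backward_mass (r : 'I_n -> R) (i : 'I_k) : R :=
  \sum_(s in F i) d s * \sum_v ppr s v * r v.

Definition gbp_invariant (j : 'I_k) (st : pstate R n k) : Prop :=
  (forall v, 0 <= st.2 v) /\
  forall i, ppr_sn i j = st.1 i + (card i)^-1 * backward_mass st.2 i.

Lemma gbp_invariant_init j : gbp_invariant j (gbp_init R F j).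
Proof.
split=> [v|i] /=; first by case: ifP => // _; rewrite invr_ge0 ler0n.
rewrite add0r /backward_mass /ppr_d_sn !mulr_sumr; apply: eq_bigr => s _.
rewrite (big_mkcond (mem (F j))) !mulr_sumr; apply: eq_bigr => t _ /=.
case: ifP => _; last by rewrite !mulr0.
by rewrite /ppr_d natrM invfM; ring.
Qed.

Lemma gbp_invariant_push j st vk :
  gbp_invariant j st -> gbp_invariant j (gbp_push e F alpha st vk).
Proof.
move=> [r_ge0 exact_sn]; split; first exact: gbp_push_ge0.
move=> i; rewrite exact_sn /backward_mass.
under [in RHS]eq_bigr do
  rewrite (gbp_push_mass F no_self_loop outdeg_gt0 alpha_gt0 alpha_lt1) mulrBr.
rewrite sumrB.
have -> : \sum_(s in F i) d s * (alpha * st.2 vk * (vk == s)%:R) =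
          \sum_(s in F i) alpha * st.2 vk * d s * (vk == s)%:R.
  by apply: eq_bigr => s _; ring.
rewrite (sum_delta (F i) (fun s => alpha * st.2 vk * d s)) /=.
by case: ifP => _; [ring | rewrite subr0 addr0].
Qed.

Lemma gbp_invariant_reach j rbmax st :
  reach (gbp_step e F alpha rbmax) (gbp_init R F j) st -> gbp_invariant j st.
Proof.
elim=> [|y z _ inv_y [vk [_ ->]]]; first exact: gbp_invariant_init.
exact: gbp_invariant_push.
Qed.

(* GBP terminates: the residual mass drops by alpha r(vk) > alpha rbmax. *)
Lemma gbp_terminates j rbmax :
  0 < rbmax -> Acc (fun y x => gbp_step e F alpha rbmax x y) (gbp_init R F j).
Proof.
move=> rbmax_gt0.
apply: (@acc_of_potential R _ _ (gbp_invariant j)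
  (fun st => \sum_s \sum_v ppr s v * st.2 v) (alpha * rbmax)).
- exact: mulr_gt0.
- move=> x y inv_x [vk [big_residue ->]]; split; first exact: gbp_invariant_push.
  under eq_bigr do rewrite (gbp_push_mass F no_self_loop outdeg_gt0 alpha_gt0 alpha_lt1).
  by rewrite sumrB -mulr_sumr sum_kronecker mulr1 lerD2l lerN2 ler_wpM2l ?ltW.
- move=> x [r_ge0 _]; apply: sumr_ge0 => s _; apply: sumr_ge0 => v _.
  by rewrite mulr_ge0 ?ppr_ge0.
- exact: gbp_invariant_init.
Qed.

(* At termination r(v) <= rbmax, and each ppr row sums to one, so the backward
   residual mass of V_i is at most rbmax times the total degree of V_i. *)
Lemma backward_mass_bound (r : 'I_n -> R) i rbmax :
  (forall v, 0 <= r v) -> (forall v, r v <= rbmax) ->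
  0 <= backward_mass r i <= rbmax * \sum_(s in F i) d s.
Proof.
move=> r_ge0 r_le; apply/andP; split.
  apply: sumr_ge0 => s _; rewrite mulr_ge0 ?ler0n //.
  by apply: sumr_ge0 => v _; rewrite mulr_ge0 ?ppr_ge0.
rewrite mulr_sumr; apply: ler_sum => s _; rewrite mulrC ler_wpM2r ?ler0n //.
rewrite -[leRHS]mulr1 -(ppr_row outdeg_gt0 alpha_gt0 alpha_lt1 s) mulr_sumr.
by apply: ler_sum => v _; rewrite mulrC ler_wpM2r ?ppr_ge0.
Qed.

Lemma avg_deg_gt0 i : 0 < avg_deg R e F i.
Proof.
rewrite /avg_deg mulr_gt0 ?invr_gt0 ?card_supernode_gt0 //.
have /set0Pn [s s_in] := supernode_nonempty i.
rewrite (bigD1 s) //= ltr_wpDr ?ltr0n //.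
by apply: sumr_ge0 => v _; exact: ler0n.
Qed.

Lemma avg_deg_le_max i j :
  i != j -> avg_deg R e F i <= \big[Num.max/0]_(i0 | i0 != j) avg_deg R e F i0.
Proof. by move=> ij; apply: le_bigmax_cond. Qed.

Lemma tp_rbmax_gt0 i j (eps delta : R) :
  i != j -> 0 < eps -> 0 < delta -> 0 < tp_rbmax e F eps delta j.
Proof.
move=> ij eps_gt0 delta_gt0; rewrite /tp_rbmax divr_gt0 ?mulr_gt0 //.
exact: lt_le_trans (avg_deg_gt0 i) (avg_deg_le_max ij).
Qed.

(* GBP is accurate for every source V_i != V_j: the neglected residual mass is at
   most rbmax |F i| avg_deg(V_i) <= eps delta |F i|. *)
Lemma gbp_accurate i j st (eps delta : R) :
  i != j -> 0 < eps -> 0 < delta ->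
  gbp_invariant j st -> gbp_terminal (tp_rbmax e F eps delta j) st ->
  ed_approx eps delta (st.1 i) (ppr_sn i j).
Proof.
move=> ij eps_gt0 delta_gt0 [r_ge0 exact_sn] terminal.
have /andP [mass_ge0 mass_le] := backward_mass_bound i r_ge0 terminal.
rewrite exact_sn; apply: ed_approx_of_underestimate; first exact: ltW.
  by rewrite lerDl mulr_ge0 // invr_ge0 ler0n.
rewrite addrC addKr; apply: le_trans (ler_wpM2l _ mass_le) _.
  by rewrite invr_ge0 ler0n.
set M := \big[Num.max/0]_(i0 | i0 != j) avg_deg R e F i0.
have M_gt0 : 0 < M := lt_le_trans (avg_deg_gt0 i) (avg_deg_le_max ij).
have -> : (card i)^-1 * (tp_rbmax e F eps delta j * \sum_(s in F i) d s) =
          eps * delta * (avg_deg R e F i / M).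
  rewrite /tp_rbmax /avg_deg -/M; field.
  by rewrite (lt0r_neq0 M_gt0) (lt0r_neq0 (card_supernode_gt0 i)).
rewrite -[leRHS]mulr1 ler_wpM2l ?ler_pdivrMr ?mul1r ?avg_deg_le_max //.
by rewrite mulr_ge0 ?ltW.
Qed.

End PushAnalysis.

Lemma nedges_gt0 (n : nat) (e : rel 'I_n) (v : 'I_n) :
  (0 < outdeg e v)%N -> (0 < nedges e)%N.
Proof.
case/card_gt0P => w; rewrite inE => vw.
by apply/card_gt0P; exists (v, w); rewrite inE.
Qed.

Lemma tp_rmax_gt0 (R : realType) (n : nat) (e : rel 'I_n) (eps delta tau : R) :
  0 < eps -> 0 < delta -> 0 < tau -> (0 < nedges e)%N -> 0 < tp_rmax e eps delta tau.
Proof.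
by move=> eps_gt0 delta_gt0 tau_gt0 m_gt0; rewrite divr_gt0 ?mulr_gt0 ?ltr0n.
Qed.

Lemma exists_other_ord (k : nat) (j : 'I_k) : (2 <= k)%N -> exists i : 'I_k, i != j.
Proof.
move=> k_ge2; have k_gt1 : (1 < k)%N by [].
case: (eqVneq j (Ordinal (ltnW k_gt1))) => [->|j_neq0].
  by exists (Ordinal k_gt1).
by exists (Ordinal (ltnW k_gt1)); rewrite eq_sym.
Qed.

Local Close Scope classical_set_scope.
Unset Implicit Arguments.

Theorem theorem3 (R : realType) (n : nat) (e : rel 'I_n) (k : nat)
  (F : 'I_k -> {set 'I_n}) (alpha eps delta tau : R) :
  (forall v : 'I_n, ~~ e v v) ->
  (forall v : 'I_n, (0 < outdeg e v)%N) ->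
  (forall i : 'I_k, F i != finset.set0) ->
  (forall i j : 'I_k, i != j -> [disjoint F i & F j]) ->
  (2 <= k)%N ->
  0 < alpha < 1 -> 0 < eps -> 0 < delta -> 0 < tau ->
  (* termination of every GFP run (any choice of pushed nodes) *)
  (forall i : 'I_k,
     Acc (fun y x => gfp_step e F alpha (tp_rmax e eps delta tau) x y) (gfp_init R e F i)) /\
  (* termination of every GBP run, for V_j with tau_j > tau *)
  (forall j : 'I_k, tau < tau_pr e F alpha j ->
     Acc (fun y x => gbp_step e F alpha (tp_rbmax e F eps delta j) x y) (gbp_init R F j)) /\
  (* accuracy of the final estimates *)
  (forall i j : 'I_k, i != j ->
     (tau < tau_pr e F alpha j ->
        forall st, reach (gbp_step e F alpha (tp_rbmax e F eps delta j)) (gbp_init R F j) st ->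
        gbp_terminal (tp_rbmax e F eps delta j) st ->
        ed_approx eps delta (st.1 i) (ppr_d_sn e F alpha i j)) /\
     (~ (tau < tau_pr e F alpha j) ->
        forall st, reach (gfp_step e F alpha (tp_rmax e eps delta tau)) (gfp_init R e F i) st ->
        gfp_terminal e (tp_rmax e eps delta tau) st ->
        ed_approx eps delta (st.1 j) (ppr_d_sn e F alpha i j))).
Proof.
move=> no_loop deg_gt0 F_nonempty _ k_ge2 /andP [alpha_gt0 alpha_lt1] eps_gt0 delta_gt0 tau_gt0.
have m_gt0 : (0 < nedges e)%N.
  have /set0Pn [v _] := F_nonempty (Ordinal (ltnW k_ge2)).
  exact: nedges_gt0 (deg_gt0 v).
split; [|split].
- move=> i; apply: gfp_terminates => //.
  exact: tp_rmax_gt0.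
- move=> j _; have [i ij] := exists_other_ord j k_ge2.
  by apply: gbp_terminates => //; exact: tp_rbmax_gt0 ij eps_gt0 delta_gt0.
- move=> i j ij; split=> [_ st run terminal | small_tau st run terminal].
  + apply: gbp_accurate => //.
    exact: gbp_invariant_reach run.
  + have tau_le : tau_pr e F alpha j <= tau by rewrite leNgt; apply/negP.
    apply: gfp_accurate tau_le _ terminal => //.
    exact: gfp_invariant_reach run.
Qed.
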